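(* Let $f:\mathbb{R}^n\to(-\infty,\infty]$ and $g:\mathbb{R}^p\to(-\infty,\infty]$ be proper closed convex functions, $A\in\mathbb{R}^{m\times n}$, $B\in\mathbb{R}^{m\times p}$, $b\in\mathbb{R}^m$, $\beta>0$, $\tilde\sigma\in[0,1)$, $G\in\mathbb{S}^n_{++}$, $H\in\mathbb{S}^p_+$, and $(\tau,\theta)\in\mathcal R_{\tilde\sigma}$. Define the set-valued operator $T$ on $\mathbb{R}^n\times\mathbb{R}^p\times\mathbb{R}^m$ and the matrix $M$ by $$T(x,y,\gamma)=\begin{bmatrix}\partial f(x)-A^*\gamma\\ \partial g(y)-B^*\gamma\\ Ax+By-b\end{bmatrix},\qquad M=\begin{bmatrix}G&0&0\\0&H+\frac{(\tau-\tau\theta+\theta)\beta}{\tau+\theta}B^*B&-\frac{\tau}{\tau+\theta}B^*\\0&-\frac{\tau}{\tau+\theta}B&\frac{1}{(\tau+\theta)\beta}I\end{bmatrix}.$$ Then $T$ is maximal monotone and $M$ is symmetric positive semidefinite.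
   Context: $\partial$ denotes the subdifferential of a convex function, $A^*$ the transpose, $\mathbb{S}^n_{++}$ ($\mathbb{S}^p_+$) the symmetric positive definite (semidefinite) $n\times n$ ($p\times p$) matrices. $\mathcal R_{\tilde\sigma}:=\{(\tau,\theta):\tau\in(-1,1-\tilde\sigma),\ \tau+\theta>0,\ (1-\tau^2)(2-\tau-\theta-\tilde\sigma)-(1-\theta)^2(1-\tau-\tilde\sigma)>0\}$. *)

From HB Require Import structures.
From mathcomp Require Import all_boot all_order all_algebra.
From mathcomp Require Import all_classical all_reals all_analysis.
Set Implicit Arguments. Unset Strict Implicit. Unset Printing Implicit Defensive.
Import Order.TTheory GRing.Theory Num.Theory.
Local Open Scope classical_set_scope.
Local Open Scope ring_scope.

Import numFieldNormedType.Exports.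

Section Defs.
Variable R : realType.

Definition dotv (n : nat) (u v : 'cV[R]_n) : R := (u^T *m v) ord0 ord0.

Definition proper_fun (n : nat) (f : 'cV[R]_n -> \bar R) : Prop :=
  (forall x, f x != -oo%E) /\ (exists x, f x \is a fin_num).

Definition closed_fun (n : nat) (f : 'cV[R]_n -> \bar R) : Prop :=
  closed [set q : 'cV[R]_n * R | (f q.1 <= q.2%:E)%E].

Definition convex_fun (n : nat) (f : 'cV[R]_n -> \bar R) : Prop :=
  forall (x y : 'cV[R]_n) (t : R), 0 < t < 1 ->
    (f (t *: x + (1 - t) *: y)%R <= t%:E * f x + (1 - t)%:E * f y)%E.

Definition proper_closed_convex (n : nat) (f : 'cV[R]_n -> \bar R) : Prop :=
  [/\ proper_fun f, closed_fun f & convex_fun f].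

Definition subdiff (n : nat) (f : 'cV[R]_n -> \bar R) (x : 'cV[R]_n) : set 'cV[R]_n :=
  [set v | f x \is a fin_num /\
           forall z, (f x + (dotv v (z - x)%R)%:E <= f z)%E].

Definition prod3 (n p m : nat) := ('cV[R]_n * 'cV[R]_p * 'cV[R]_m)%type.

Definition dot3 (n p m : nat) (u v : prod3 n p m) : R :=
  dotv u.1.1 v.1.1 + dotv u.1.2 v.1.2 + dotv u.2 v.2.

Definition sub3 (n p m : nat) (u v : prod3 n p m) : prod3 n p m :=
  (u.1.1 - v.1.1, u.1.2 - v.1.2, u.2 - v.2).

Definition monotone_op (n p m : nat) (T : prod3 n p m -> set (prod3 n p m)) : Prop :=
  forall z z' w w', T z w -> T z' w' -> 0 <= dot3 (sub3 z z') (sub3 w w').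

Definition maximal_monotone_op (n p m : nat) (T : prod3 n p m -> set (prod3 n p m)) : Prop :=
  monotone_op T /\
  forall S : prod3 n p m -> set (prod3 n p m), monotone_op S ->
    (forall z w, T z w -> S z w) -> forall z w, S z w -> T z w.

Definition symmetric_mx (k : nat) (X : 'M[R]_k) : Prop := X^T = X.

Definition spd (k : nat) (X : 'M[R]_k) : Prop :=
  symmetric_mx X /\ forall v : 'cV[R]_k, v != 0 -> 0 < dotv v (X *m v).
Definition spsd (k : nat) (X : 'M[R]_k) : Prop :=
  symmetric_mx X /\ forall v : 'cV[R]_k, 0 <= dotv v (X *m v).

Definition region_R (s tau theta : R) : Prop :=
  [/\ -1 < tau < 1 - s, 0 < tau + theta &
      0 < (1 - tau ^+ 2) * (2 - tau - theta - s) - (1 - theta) ^+ 2 * (1 - tau - s)].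

Definition opT (n p m : nat) (f : 'cV[R]_n -> \bar R) (g : 'cV[R]_p -> \bar R)
  (A : 'M[R]_(m, n)) (B : 'M[R]_(m, p)) (b : 'cV[R]_m)
  (z : prod3 n p m) : set (prod3 n p m) :=
  [set w | exists u v, [/\ subdiff f z.1.1 u, subdiff g z.1.2 v &
      w = (u - A^T *m z.2, v - B^T *m z.2, A *m z.1.1 + B *m z.1.2 - b)]].

Definition matM (n p m : nat) (A : 'M[R]_(m, n)) (B : 'M[R]_(m, p))
  (beta tau theta : R) (G : 'M[R]_n) (H : 'M[R]_p) : 'M[R]_(n + (p + m)) :=
  block_mx G 0 0
    (block_mx (H + ((tau - tau * theta + theta) * beta / (tau + theta)) *: (B^T *m B))
              (- (tau / (tau + theta)) *: B^T)
              (- (tau / (tau + theta)) *: B)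
              ((1 / ((tau + theta) * beta)) *: 1%:M)).

End Defs.

From HB Require Import structures.
From mathcomp Require Import all_boot all_order all_algebra.
From mathcomp Require Import all_classical all_reals all_analysis.
From mathcomp Require Import ring lra.
Import Order.TTheory GRing.Theory Num.Theory.
Import numFieldNormedType.Exports.
Local Open Scope ring_scope.

(* Completing the square in the multiplier block writes the quadratic form of
   M as <x, G x> + <y, H y> + (1 - tau) beta |B y|^2
   + |gamma - tau beta B y|^2 / ((tau + theta) beta), which is nonnegative.

   T is the sum of the subdifferential of (x, y, gamma) |-> f x + g y - <b, gamma>
   and of a skew linear map K, i.e. <d, K d> = 0.  Monotonicity follows from that
   of subdifferentials, and maximality from Minty's argument applied to
   T + K = df x dg x {-b}: its resolvent only needs proximal points of f and g.
   The proximal point of f at a minimizes f + |. - a|^2 / 2; this function is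
   bounded below (closed convex functions have a minorant of the form
   r - c |y - x0|), its minimizing sequences are Cauchy by the parallelogram law,
   the limit is a minimizer because the epigraph of f is closed, and the
   first-order optimality condition says exactly that a - x is a subgradient. *)

Set Implicit Arguments. Unset Strict Implicit. Unset Printing Implicit Defensive.

Section InnerProduct.
Variable R : realType.
Implicit Types k l : nat.

Lemma dotvE k (u v : 'cV[R]_k) : dotv u v = \sum_i u i ord0 * v i ord0.
Proof. by rewrite /dotv mxE; apply: eq_bigr => i _; rewrite mxE. Qed.

Lemma dotvC k (u v : 'cV[R]_k) : dotv u v = dotv v u.
Proof. by rewrite !dotvE; apply: eq_bigr => i _; rewrite mulrC. Qed.

Lemma dotvDl k (u v w : 'cV[R]_k) : dotv (u + v) w = dotv u w + dotv v w.
Proof. by rewrite !dotvE -big_split; apply: eq_bigr => i _; rewrite mxE mulrDl. Qed.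

Lemma dotvDr k (u v w : 'cV[R]_k) : dotv w (u + v) = dotv w u + dotv w v.
Proof. by rewrite dotvC dotvDl !(dotvC w). Qed.

Lemma dotvZl k a (u w : 'cV[R]_k) : dotv (a *: u) w = a * dotv u w.
Proof. by rewrite !dotvE mulr_sumr; apply: eq_bigr => i _; rewrite mxE mulrA. Qed.

Lemma dotvZr k a (u w : 'cV[R]_k) : dotv w (a *: u) = a * dotv w u.
Proof. by rewrite dotvC dotvZl dotvC. Qed.

Lemma dotvNl k (u w : 'cV[R]_k) : dotv (- u) w = - dotv u w.
Proof. by rewrite -scaleN1r dotvZl mulN1r. Qed.

Lemma dotvNr k (u w : 'cV[R]_k) : dotv w (- u) = - dotv w u.
Proof. by rewrite dotvC dotvNl dotvC. Qed.

Lemma dotvBl k (u v w : 'cV[R]_k) : dotv (u - v) w = dotv u w - dotv v w.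
Proof. by rewrite dotvDl dotvNl. Qed.

Lemma dotv0r k (w : 'cV[R]_k) : dotv w 0 = 0.
Proof. by rewrite dotvE big1 // => i _; rewrite mxE mulr0. Qed.

Lemma dotv_trmx k l (M : 'M[R]_(k, l)) u v : dotv u (M^T *m v) = dotv (M *m u) v.
Proof. by rewrite /dotv trmx_mul mulmxA. Qed.

Lemma dotv_col_mx k l (a c : 'cV[R]_k) (b d : 'cV[R]_l) :
  dotv (col_mx a b) (col_mx c d) = dotv a c + dotv b d.
Proof. by rewrite /dotv tr_col_mx mul_row_col mxE. Qed.

Lemma dotv_ge0 k (u : 'cV[R]_k) : 0 <= dotv u u.
Proof. by rewrite dotvE; apply: sumr_ge0 => i _; rewrite -expr2 sqr_ge0. Qed.

Lemma dotv_eq0 k (u : 'cV[R]_k) : (dotv u u == 0) = (u == 0).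
Proof.
apply/idP/eqP => [|->]; last by rewrite dotv0r.
rewrite dotvE psumr_eq0 => [/allP u0|i _]; last by rewrite -expr2 sqr_ge0.
apply/matrixP => i j; rewrite (ord1 j) mxE.
by have /implyP/(_ isT) := u0 i (mem_index_enum i); rewrite mulf_eq0 orbb => /eqP.
Qed.

Lemma sqr_mx_norm_le_dotv k (v : 'cV[R]_k) : `|v| ^+ 2 <= dotv v v.
Proof.
have -> : `|v| = mx_norm v by [].
have [->|/mx_norm_neq0 [i ->]] := eqVneq (mx_norm v) 0; first by rewrite expr0n dotv_ge0.
rewrite real_normK ?num_real // (ord1 i.2) dotvE (bigD1 i.1) //= -expr2 lerDl.
by apply: sumr_ge0 => j _; rewrite -expr2 sqr_ge0.
Qed.

Lemma dotvDD k (u v : 'cV[R]_k) :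
  dotv (u + v) (u + v) = dotv u u + 2 * dotv u v + dotv v v.
Proof. by rewrite dotvDl !dotvDr (dotvC v u); ring. Qed.

Lemma dotvDD_le k (u v : 'cV[R]_k) :
  dotv (u + v) (u + v) <= 2 * dotv u u + 2 * dotv v v.
Proof.
by have := dotv_ge0 (u - v); rewrite !dotvDD dotvNl !dotvNr opprK; lra.
Qed.

Lemma dotv_midpoint k (u v : 'cV[R]_k) :
  dotv ((1/2) *: u + (1/2) *: v) ((1/2) *: u + (1/2) *: v)
  = dotv u u / 2 + dotv v v / 2 - dotv (u - v) (u - v) / 4.
Proof. by rewrite !dotvDD dotvNl !dotvNr opprK !dotvZl !dotvZr; field. Qed.

Lemma spd_spsd k (X : 'M[R]_k) : spd X -> spsd X.
Proof.
move=> [symX posX]; split=> // v.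
by have [->|/posX/ltW//] := eqVneq v 0; rewrite mulmx0 dotv0r.
Qed.

End InnerProduct.

Section PenaltyMatrix.
Variables (R : realType) (n p m : nat).
Variables (A : 'M[R]_(m, n)) (B : 'M[R]_(m, p)) (G : 'M[R]_n) (H : 'M[R]_p).
Variables (beta tau theta : R).

Lemma symmetric_matM :
  symmetric_mx G -> symmetric_mx H -> symmetric_mx (matM A B beta tau theta G H).
Proof.
move=> symG symH; rewrite /symmetric_mx /matM !tr_block_mx !trmx0 symG.
by rewrite !linearD !linearZ /= trmx_mul trmxK symH trmx1.
Qed.

Lemma matM_form_ge0 : 0 < beta -> tau < 1 -> 0 < tau + theta ->
  spsd G -> spsd H -> forall v, 0 <= dotv v (matM A B beta tau theta G H *m v).
Proof.
move=> beta0 tau1 S0 [_ posG] [_ posH] v.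
rewrite -(vsubmxK v) -(vsubmxK (dsubmx v)) /matM.
set x := usubmx v; set y := usubmx (dsubmx v); set c := dsubmx (dsubmx v).
rewrite !mul_block_col !dotv_col_mx !mul0mx !addr0 add0r dotv_col_mx.
rewrite !mulmxDl !dotvDr -!scalemxAl !dotvZr -mulmxA dotv_trmx mul1mx dotv_trmx.
rewrite (dotvC c (B *m y)).
have := dotv_ge0 (c - (tau * beta) *: (B *m y)).
rewrite dotvDD dotvNl !dotvNr opprK !dotvZl !dotvZr (dotvC c).
have := dotv_ge0 (B *m y); have := posG x; have := posH y.
set X := dotv (B *m y) (B *m y); set Y := dotv (B *m y) c; set Z := dotv c c.
move=> Hy Gx X0 sq0.
have Sb0 : 0 < (tau + theta) * beta by rewrite mulr_gt0.
have square : (tau - tau * theta + theta) * beta / (tau + theta) * X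
    - 2 * (tau / (tau + theta)) * Y + 1 / ((tau + theta) * beta) * Z
  = (Z + 2 * - (tau * beta * Y) + tau * beta * (tau * beta * X))
      / ((tau + theta) * beta) + (1 - tau) * beta * X.
  by field; rewrite !gt_eqF.
have : 0 <= (Z + 2 * - (tau * beta * Y) + tau * beta * (tau * beta * X))
      / ((tau + theta) * beta) by rewrite divr_ge0 // ltW.
have : 0 <= (1 - tau) * beta * X by rewrite !mulr_ge0 // ?subr_ge0 ltW.
lra.
Qed.

Lemma spsd_matM : 0 < beta -> tau < 1 -> 0 < tau + theta ->
  spsd G -> spsd H -> spsd (matM A B beta tau theta G H).
Proof.
move=> beta0 tau1 S0 psdG psdH; split; last exact: matM_form_ge0.
by apply: symmetric_matM; [case: psdG | case: psdH].
Qed.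

End PenaltyMatrix.

Section MonotoneOperators.
Variables (R : realType) (n p m : nat).
Local Notation V := (prod3 R n p m).
Implicit Types (z w d : V) (T : V -> set V).

Lemma sub3E z w : sub3 z w = z - w. Proof. by []. Qed.

Lemma dot3Dr d z w : dot3 d (z + w) = dot3 d z + dot3 d w.
Proof. by rewrite /dot3 !dotvDr; lra. Qed.

Lemma dot3Nr d z : dot3 d (- z) = - dot3 d z.
Proof. by rewrite /dot3 !dotvNr; lra. Qed.

Lemma dot3_ge0 d : 0 <= dot3 d d.
Proof. by rewrite /dot3 !addr_ge0 ?dotv_ge0. Qed.

Lemma dot3_eq0 d : dot3 d d = 0 -> d = 0.
Proof.
case: d => [[x y] c]; rewrite /dot3 /= => d0.
have := dotv_ge0 x; have := dotv_ge0 y; have := dotv_ge0 c => c0 y0 x0.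
have /eqP : dotv x x = 0 by lra.
have /eqP : dotv y y = 0 by lra.
have /eqP : dotv c c = 0 by lra.
by rewrite !dotv_eq0 => /eqP-> /eqP-> /eqP->.
Qed.

Definition skew (K : V -> V) := forall d, dot3 d (K d) = 0.

Lemma monotone_op_addr_skew T (K : V -> V) : {morph K : z w / z - w} -> skew K ->
  monotone_op T -> monotone_op (fun z w => T z (w + K z)).
Proof.
move=> KB Kskew monoT z z' w w' Tzw Tzw'; have := monoT _ _ _ _ Tzw Tzw'.
by rewrite !sub3E opprD addrACA -KB [dot3 _ (_ + K _)]dot3Dr Kskew addr0.
Qed.

(* Minty's argument: solving [T z' (u - z')] for [u := z + w + K z] gives a
   point [(z', w')] of the graph with [<z - z', w - w'> = - |z - z'|^2]. *)
Lemma maximal_monotone_op_addr_skew T (K : V -> V) : {morph K : z w / z - w} -> skew K ->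
  monotone_op T -> (forall u, exists z, T z (u - z)) ->
  maximal_monotone_op (fun z w => T z (w + K z)).
Proof.
move=> KB Kskew monoT resolvent; split; first exact: monotone_op_addr_skew.
move=> S monoS TS z w Szw.
have [z' Tz'] := resolvent (z + w + K z).
set w' := z + w + K z - z' - K z'.
have Sz'w' : S z' w' by apply: TS; rewrite /w' subrK.
have := monoS _ _ _ _ Szw Sz'w'.
have -> : sub3 w w' = - sub3 z z' - K (sub3 z z').
  by rewrite /w' !sub3E KB !opprD !opprK !addrA [w - z]addrC addrK [- z - K z + z']addrAC.
rewrite dot3Dr !dot3Nr Kskew oppr0 addr0 oppr_ge0 => le0.
have /eqP : dot3 (sub3 z z') (sub3 z z') = 0 by apply/eqP; rewrite eq_le le0 dot3_ge0.
move/eqP/dot3_eq0/eqP; rewrite sub3E subr_eq0 => /eqP zz'.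
by move: Tz'; rewrite -zz' -!addrA addrC !addrA subrK.
Qed.

End MonotoneOperators.

Lemma subdiff_monotone (R : realType) k (f : 'cV[R]_k -> \bar R) x x' u u' :
  subdiff f x u -> subdiff f x' u' -> 0 <= dotv (x - x') (u - u').
Proof.
move=> [fx le_fx] [fx' le_fx']; have := le_fx x'; have := le_fx' x.
rewrite -(fineK fx) -(fineK fx') -!EFinD !lee_fin.
rewrite (dotvC (x - x')) dotvBl -(opprB x x') dotvNr; lra.
Qed.

Section SplitOperator.
Variables (R : realType) (n p m : nat).
Variables (f : 'cV[R]_n -> \bar R) (g : 'cV[R]_p -> \bar R).
Variables (A : 'M[R]_(m, n)) (B : 'M[R]_(m, p)) (b : 'cV[R]_m).
Local Notation V := (prod3 R n p m).

(* [subdiff_sep] is the subdifferential of [(x, y, c) |-> f x + g y - <b, c>]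
   and [coupling] the skew linear part, so that [opT = subdiff_sep - coupling]. *)
Definition subdiff_sep (z w : V) : Prop :=
  [/\ subdiff f z.1.1 w.1.1, subdiff g z.1.2 w.1.2 & w.2 = - b].

Definition coupling (z : V) : V :=
  (A^T *m z.2, B^T *m z.2, - (A *m z.1.1 + B *m z.1.2)).

Lemma couplingB : {morph coupling : z w / z - w}.
Proof.
move=> [[x y] c] [[x' y'] c']; rewrite /coupling /=.
have sumB : A *m x - A *m x' + (B *m y - B *m y')
    = A *m x + B *m y - (A *m x' + B *m y') by rewrite opprD addrACA.
by rewrite !mulmxBr sumB opprD.
Qed.

Lemma coupling_skew : skew coupling.
Proof. by move=> [[x y] c]; rewrite /dot3 /= !dotv_trmx dotvNr dotvDr (dotvC c) (dotvC c); lra. Qed.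

Lemma subdiff_sep_monotone : monotone_op subdiff_sep.
Proof.
move=> z z' w w' [fzw gzw w2] [fzw' gzw' w2'].
rewrite /dot3 /= w2 w2' subrr dotv0r addr0.
by rewrite addr_ge0 // (subdiff_monotone fzw fzw', subdiff_monotone gzw gzw').
Qed.

Lemma opTE : opT f g A B b = fun z w => subdiff_sep z (w + coupling z).
Proof.
apply/funext => -[[x y] c]; apply/funext => -[[u v] e] /=; apply/propext.
rewrite /subdiff_sep /coupling /=; split.
  by case=> [u' [v' [fu gv [-> -> ->]]]]; rewrite !subrK addrAC subrr add0r.
case=> [fu gv /eqP]; rewrite subr_eq addrC => /eqP->.
by exists (u + A^T *m c), (v + B^T *m c); rewrite !addrK.
Qed.

End SplitOperator.

Section ProximalPoint.
Variables (R : realType) (k : nat).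
Local Open Scope classical_set_scope.
Implicit Types (x y v : 'cV[R]_k) (xs : nat -> 'cV[R]_k).

Lemma le0_of_le_mul_small (P Q : R) :
  0 <= Q -> (forall t, 0 < t < 1 -> P <= t * Q) -> P <= 0.
Proof.
move=> Q0 le_tQ; rewrite leNgt; apply/negP => P0.
have t0 : 0 < P / (P + Q + 1) by rewrite divr_gt0 //; lra.
have t1 : P / (P + Q + 1) < 1 by rewrite ltr_pdivrMr; lra.
have := le_tQ _ (introT andP (conj t0 t1)).
have -> : P / (P + Q + 1) * Q = P - P * (P + 1) / (P + Q + 1) by field; lra.
have : 0 < P * (P + 1) / (P + Q + 1) by rewrite divr_gt0 ?mulr_gt0 //; lra.
lra.
Qed.

Lemma sqdist_continuous a : continuous (fun v : 'cV[R]_k => dotv (v - a) (v - a)).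
Proof.
have -> : (fun v : 'cV[R]_k => dotv (v - a) (v - a)) =
    (fun v => \sum_(i <- index_enum 'I_k) (v i ord0 - a i ord0) * (v i ord0 - a i ord0)).
  by apply: funext => v; rewrite dotvE; apply: eq_bigr => i _; rewrite !mxE.
apply: continuous_big => [|i _ v]; first exact: add_continuous.
have coord_a : {for v, continuous (fun x : 'cV[R]_k => x i ord0 - a i ord0)}.
  apply: (@continuousB _ _ _ (fun x : 'cV[R]_k => x i ord0) (fun=> a i ord0)).
    exact: coord_continuous.
  exact: cst_continuous.
exact: (continuousM coord_a coord_a).
Qed.

Lemma cvg_of_sqdist_harmonic_le xs c : 0 < c ->
  (forall i j, dotv (xs i - xs j) (xs i - xs j) <= c * (i.+1%:R^-1 + j.+1%:R^-1)) ->
  cvg (xs @ \oo).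
Proof.
move=> c0 xs_dist.
suff : cauchy_ex (xs @ \oo) by move/cauchy_exP/cauchy_cvg.
move=> e e0; rewrite /fmapE -ball_normE /ball_.
have eps0 : 0 < e ^+ 2 / (2 * c) by rewrite divr_gt0 ?exprn_gt0 ?mulr_gt0.
have [i _ small_i] := near_infty_natSinv_lt (PosNum eps0).
exists (xs i), i => // j /= le_ij.
have le_ji : j.+1%:R^-1 <= i.+1%:R^-1 :> R by rewrite lef_pV2 ?posrE // ler_nat.
have := sqr_mx_norm_le_dotv (xs i - xs j); have := xs_dist i j.
have := small_i i (leqnn i); rewrite /= ltr_pdivlMr ?mulr_gt0 // => lt_i le_ij' le_norm.
rewrite -(ltr_pXn2r (_ : (0 < 2)%N)) ?nnegrE ?normr_ge0 ?ltW //.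
move: le_ji lt_i le_ij' le_norm; set hi := i.+1%:R^-1; set hj := j.+1%:R^-1 => *.
have : c * (hi + hj) <= c * (2 * hi) by rewrite ler_pM2l //; lra.
lra.
Qed.

Variable f : 'cV[R]_k -> \bar R.
Hypotheses (f_proper : proper_fun f) (f_closed : closed_fun f) (f_convex : convex_fun f).

Lemma closed_fun_lsc x0 r : (r%:E < f x0)%E ->
  exists2 d, 0 < d & forall x, `|x0 - x| < d -> (r%:E < f x)%E.
Proof.
move=> lt_r; have /closed_openC := f_closed; rewrite openE => /(_ (x0, r)).
have notepi : (~` [set q : 'cV[R]_k * R | (f q.1 <= q.2%:E)%E]) (x0, r).
  by rewrite /= => /(lt_le_trans lt_r); rewrite ltxx.
move=> /(_ notepi) /nbhs_ballP [d d0 ball_d]; exists d => // x lt_x.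
have /ball_d : ball (x0, r) d (x, r) by split; [rewrite /= -ball_normE | exact: ballxx].
by rewrite /= => /negP; rewrite -ltNge.
Qed.

Lemma closed_fun_cvg_le xs x c : xs @ \oo --> x ->
  (\forall j \near \oo, (f (xs j) <= c%:E)%E) -> (f x <= c%:E)%E.
Proof.
move=> xs_x le_c.
have xs_c : (xs j, c) @[j --> \oo] --> (x, c) by exact: cvg_pair xs_x (cvg_cst c).
exact: (closed_cvg _ f_closed le_c _ xs_c).
Qed.

(* Convexity along the segment from [x0] to [y] transports the lower bound
   that lower semicontinuity gives near [x0]. *)
Lemma convex_fun_norm_minorant :
  exists x0 r c, forall y, ((r - c * `|y - x0|)%:E <= f y)%E.
Proof.
have [x0 fx0] := f_proper.2; set r0 := fine (f x0).
have fx0E : f x0 = r0%:E by rewrite fineK.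
have [d d0 near_x0] : exists2 d, 0 < d & forall x, `|x0 - x| < d -> ((r0 - 1)%:E < f x)%E.
  by apply: closed_fun_lsc; rewrite fx0E lte_fin; lra.
exists x0, (r0 - 1 - d^-1), d^-1 => y.
case Ey: (f y) => [ry| |]; [|exact: leey|by have := f_proper.1 y; rewrite Ey].
set M := `|y - x0|; have M0 : 0 <= M by exact: normr_ge0.
set t := d / (1 + d + M).
have t0 : 0 < t by rewrite divr_gt0 //; lra.
have t1 : t < 1 by rewrite ltr_pdivrMr; lra.
have /near_x0 : `|x0 - (t *: y + (1 - t) *: x0)| < d.
  have -> : x0 - (t *: y + (1 - t) *: x0) = t *: (x0 - y).
    by apply/matrixP => i j; rewrite !mxE; ring.
  rewrite normrZ gtr0_norm // distrC -/M /t mulrAC ltr_pdivrMr; nra.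
have := f_convex y x0 (introT andP (conj t0 t1)); rewrite Ey fx0E -!EFinM -EFinD.
move=> /[swap] /lt_le_trans /[apply]; rewrite !lte_fin lee_fin => lt_conv.
have K0 : 0 < 1 + d + M by lra.
have : r0 - ry < (1 + d + M) / d.
  rewrite ltr_pdivlMr // mulrC -{1}[d](divfK (lt0r_neq0 K0)) -/t mulrAC.
  by rewrite -[X in _ < X]mul1r ltr_pM2r //; lra.
have -> : r0 - 1 - d^-1 - d^-1 * M = r0 - (1 + d + M) / d by field; rewrite gt_eqF.
lra.
Qed.

Variable a : 'cV[R]_k.

Definition prox_objective x := (f x + (dotv (x - a) (x - a) / 2)%:E)%E.

Lemma prox_objectiveE x r :
  prox_objective x = r%:E -> f x = (r - dotv (x - a) (x - a) / 2)%:E.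
Proof. by rewrite /prox_objective; case: (f x) => // r' [<-]; rewrite addrK. Qed.

Lemma prox_objective_bounded_below : exists Lb, forall x, (Lb%:E <= prox_objective x)%E.
Proof.
have [x0 [r [c minor]]] := convex_fun_norm_minorant.
exists (r - c ^+ 2 - dotv (a - x0) (a - x0) / 2) => x.
apply: le_trans (leeD2r _ (minor x)); rewrite -EFinD lee_fin.
have := sqr_mx_norm_le_dotv (x - x0); have := dotvDD_le (x - a) (a - x0).
rewrite addrA subrK; set M := `|x - x0|.
have := sqr_ge0 (M / 2 - c); lra.
Qed.

(* The parallelogram law makes [prox_objective] strongly convex, so points
   with nearly minimal value are close to each other. *)
Lemma prox_objective_near_min_close mu x y rx ry :
  (forall z, (mu%:E <= prox_objective z)%E) ->
  prox_objective x = rx%:E -> prox_objective y = ry%:E ->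
  dotv (x - y) (x - y) <= 4 * (rx + ry - 2 * mu).
Proof.
move=> le_mu /prox_objectiveE fx /prox_objectiveE fy.
set z := (1/2) *: x + (1 - 1/2) *: y.
have half : 0 < (1/2 : R) < 1 by apply/andP; split; lra.
have := f_convex x y half; rewrite fx fy -!EFinM -EFinD -/z.
have := le_mu z; rewrite /prox_objective.
case: (f z) => [rz| |]; last 2 first.
- by rewrite leye_eq.
- by rewrite leNye.
rewrite -EFinD !lee_fin.
have -> : z - a = (1/2) *: (x - a) + (1/2) *: (y - a).
  by apply/matrixP => i j; rewrite !mxE; field.
rewrite dotv_midpoint opprB addrA subrK; lra.
Qed.

Lemma prox_objective_cvg_le mu xs x : xs @ \oo --> x ->
  (forall j, exists2 r, prox_objective (xs j) = r%:E & r < mu + j.+1%:R^-1) ->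
  (prox_objective x <= mu%:E)%E.
Proof.
move=> xs_x near_mu; set q := fun v => dotv (v - a) (v - a).
suff : (f x <= (mu - q x / 2)%:E)%E by move/(leeD2r (q x / 2)%:E); rewrite -EFinD subrK.
apply/lee_addgt0Pr => e e0; rewrite -EFinD; apply: (closed_fun_cvg_le xs_x).
have q_cvg : (q \o xs) @ \oo --> q x.
  exact: (continuous_cvg _ (@sqdist_continuous a x) xs_x).
have e2 : 0 < e / 2 by rewrite divr_gt0.
near=> j; have [r /prox_objectiveE -> lt_r] := near_mu j; rewrite lee_fin.
have : j.+1%:R^-1 < e / 2 by near: j; exact: (near_infty_natSinv_lt (PosNum e2)).
have : `|q x - q (xs j)| < e by near: j; exact: cvgr_dist_lt.
move: lt_r; rewrite -/(q (xs j)); set hj := j.+1%:R^-1 => *.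
have := ler_norm (q x - q (xs j)); lra.
Unshelve. all: end_near.
Qed.

Lemma prox_objective_min :
  exists x, f x \is a fin_num /\ forall y, (prox_objective x <= prox_objective y)%E.
Proof.
have [Lb le_Lb] := prox_objective_bounded_below.
have [x1 fx1] := f_proper.2.
pose S := [set r : R | exists x, prox_objective x = r%:E].
have S_inf : has_inf S.
  split; last by exists Lb => r [x Px]; rewrite -lee_fin -Px.
  by exists (fine (prox_objective x1)), x1; rewrite fineK // fin_numD fx1.
set mu := inf S.
have le_mu y : (mu%:E <= prox_objective y)%E.
  case Py: (prox_objective y) => [r| |]; last 2 first.
  - exact: leey.
  - by have := le_Lb y; rewrite Py leeNy_eq.
  by rewrite lee_fin; apply: (ge_inf S_inf.2); exists y.
have /choice [xs near_mu] :
    forall j, exists x, exists2 r, prox_objective x = r%:E & r < mu + j.+1%:R^-1.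
  move=> j; have hj : 0 < j.+1%:R^-1 :> R by rewrite invr_gt0.
  have [r [x Px] lt_r] := inf_adherent hj S_inf.
  by exists x, r.
have xs_cvg : cvg (xs @ \oo).
  apply: (@cvg_of_sqdist_harmonic_le xs 4) => // i j.
  have [ri Pi lt_i] := near_mu i; have [rj Pj lt_j] := near_mu j.
  move: (prox_objective_near_min_close le_mu Pi Pj) lt_i lt_j.
  set hi := i.+1%:R^-1; set hj := j.+1%:R^-1; lra.
have le_lim := prox_objective_cvg_le xs_cvg near_mu.
exists (lim (xs @ \oo)); split; last by move=> y; exact: le_trans le_lim (le_mu y).
move: le_lim; rewrite /prox_objective.
case: (f _) (f_proper.1 (lim (xs @ \oo))) => //= r _ _.
Qed.

(* First-order optimality: moving from the minimizer [x] towards [z] by [t]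
   raises [prox_objective] by at most [t (f z - f x + <x - a, z - x>) + O(t^2)]. *)
Lemma prox_objective_min_subdiff x : f x \is a fin_num ->
  (forall y, (prox_objective x <= prox_objective y)%E) -> subdiff f x (a - x).
Proof.
move=> fx min_x; split => // z; rewrite -(fineK fx); set rx := fine (f x).
case Ez: (f z) => [rz| |]; [|exact: leey|by have := f_proper.1 z; rewrite Ez].
rewrite -EFinD lee_fin.
suff : rx + dotv (a - x) (z - x) - rz <= 0 by lra.
apply: (le0_of_le_mul_small (_ : 0 <= dotv (z - x) (z - x) / 2)).
  by rewrite divr_ge0 ?dotv_ge0.
move=> t t01; set w := t *: z + (1 - t) *: x.
have := f_convex z x t01; rewrite Ez -(fineK fx) -/rx -/w -!EFinM -EFinD.
have := min_x w; rewrite /prox_objective -(fineK fx) -/rx.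
case: (f w) => [rw| |]; last 2 first.
- by rewrite leey.
- by rewrite leNye.
rewrite -!EFinD !lee_fin.
have -> : w - a = (x - a) + t *: (z - x) by apply/matrixP => i j; rewrite !mxE; ring.
rewrite [dotv (_ + _ *: _) _]dotvDD !dotvZr dotvZl.
rewrite (_ : dotv (a - x) (z - x) = - dotv (x - a) (z - x)); last by rewrite -dotvNl opprB.
have t0 : 0 < t by case/andP: t01.
move=> min_w conv_w; rewrite -(ler_pM2l t0); nra.
Qed.

Lemma subdiff_prox : exists x, subdiff f x (a - x).
Proof.
have [x [fx min_x]] := prox_objective_min.
by exists x; exact: prox_objective_min_subdiff.
Qed.

End ProximalPoint.

Lemma opT_maximal_monotone (R : realType) (n p m : nat)
    (f : 'cV[R]_n -> \bar R) (g : 'cV[R]_p -> \bar R)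
    (A : 'M[R]_(m, n)) (B : 'M[R]_(m, p)) (b : 'cV[R]_m) :
  proper_closed_convex f -> proper_closed_convex g ->
  maximal_monotone_op (opT f g A B b).
Proof.
move=> [f_proper f_closed f_convex] [g_proper g_closed g_convex].
rewrite opTE; apply: maximal_monotone_op_addr_skew.
- exact: couplingB.
- exact: coupling_skew.
- exact: subdiff_sep_monotone.
move=> [[u v] c].
have [x fx] := subdiff_prox f_proper f_closed f_convex u.
have [y gy] := subdiff_prox g_proper g_closed g_convex v.
by exists (x, y, c + b); split => //=; rewrite opprD addNKr.
Qed.

Unset Implicit Arguments.

Theorem proposition2p1 (R : realType) (n p m : nat)
  (f : 'cV[R]_n -> \bar R) (g : 'cV[R]_p -> \bar R)
  (A : 'M[R]_(m, n)) (B : 'M[R]_(m, p)) (b : 'cV[R]_m)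
  (beta s tau theta : R) (G : 'M[R]_n) (H : 'M[R]_p) :
  proper_closed_convex f -> proper_closed_convex g ->
  0 < beta -> 0 <= s < 1 -> spd G -> spsd H -> region_R s tau theta ->
  maximal_monotone_op (opT f g A B b) /\ spsd (matM A B beta tau theta G H).
Proof.
move=> hf hg beta0 /andP[s0 _] hG hH [/andP[_ tau_lt] S0 _].
split; first exact: opT_maximal_monotone.
by apply: spsd_matM => //; [lra | exact: spd_spsd].
Qed.
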